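(* For every integer $N\ge 0$, let $T_{1\times 4}(6,N)$ be the number of tilings of a $6\times n$ rectangle, $n=2N/3$, by $N$ tiles of size $1\times 4$ (and $0$ if $2N/3\notin\mathbb{Z}$). Then, as formal power series, \[ \sum_{N\ge 0} T_{1\times 4}(6,N)\,z^N=\frac{(1-z^6)^3}{1-7z^6+6z^{12}-4z^{18}+z^{24}}. \]
   Context: A tiling of an $m\times n$ rectangle (width $m$, length $n$, made of $mn$ unit squares) by $a\times b$ tiles is a partition of the rectangle into non-overlapping axis-parallel $a\times b$ rectangles with integer corner coordinates, each placed in either of its two orientations. Tilings related by reflections or rotations of the rectangle are counted as distinct. The empty tiling counts once for $N=0$. *)

From HB Require Import structures.
From mathcomp Require Import all_boot all_order all_algebra.
Set Implicit Arguments. Unset Strict Implicit. Unset Printing Implicit Defensive.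
Import Order.TTheory GRing.Theory Num.Theory.

Definition cell (m n : nat) := ('I_m * 'I_n)%type.

Definition block (m n : nat) (i j h w : nat) : {set cell m n} :=
  [set c : cell m n | (i <= c.1 < i + h) && (j <= c.2 < j + w)].

Definition is_tile (a b m n : nat) (S : {set cell m n}) : bool :=
  [exists i : 'I_m, exists j : 'I_n,
     ((i + a <= m) && (j + b <= n) && (S == @block m n i j a b)) ||
     ((i + b <= m) && (j + a <= n) && (S == @block m n i j b a))].

Definition is_tiling (a b m n : nat) (P : {set {set cell m n}}) : bool :=
  partition P [set: cell m n] && [forall S in P, is_tile a b S].

Definition ntilings (a b m n N : nat) : nat :=
  #|[set P : {set {set cell m n}} | is_tiling a b P && (#|P| == N)]|.

Definition T14_6 (N : nat) : nat :=
  if 3 %| N.*2 then ntilings 1 4 6 (N.*2 %/ 3) N else 0.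

Local Open Scope ring_scope.

Definition numer : {poly int} := (1 - 'X^6) ^+ 3.
Definition denom : {poly int} := 1 - 7%:P * 'X^6 + 6%:P * 'X^12 - 4%:P * 'X^18 + 'X^24.

(* Transfer matrix.  Sweep the 6 x n rectangle column by column, always
   covering the top-most free cell of the current column by a horizontal or a
   vertical tile.  Once a column is full, the cells covered so far in the next
   three columns form a profile; a tiling is a walk in the automaton of
   profiles, and only 47 profiles are reachable from the empty one.  Away from
   the right end (while horizontal tiles still fit) the automaton does not
   depend on the position, and the vectors v_j counting walks of length j from
   the empty profile satisfy v_16 - 7 v_12 + 6 v_8 - 4 v_4 + v_0 = 0, as a
   direct computation shows.  Hence the numbers of tilings obey the recurrence
   of the denominator, and the numerator is read off the first values.  Since
   6 n = 4 N, only N divisible by 3 contribute, with z^6 shifting n by 4. *)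

From mathcomp Require Import all_boot all_algebra.
From mathcomp Require Import zify ring.
Set Implicit Arguments. Unset Strict Implicit. Unset Printing Implicit Defensive.
Import GRing.Theory.

Section Tilings.
Variables (T : finType) (tile : pred {set T}).
Hypothesis tile_neq0 : forall S, tile S -> S != set0.

Definition tilings (R : {set T}) : {set {set {set T}}} :=
  [set P | partition P R && [forall S in P, tile S]].

Lemma card_tilings0 : #|tilings set0| = 1.
Proof.
rewrite -(cards1 (set0 : {set {set T}})); apply: eq_card => P.
rewrite !inE partition_set0; apply/andP/eqP => [[/eqP//]|->]; split=> //.
by apply/forall_inP => S; rewrite inE.
Qed.

Lemma tilings_setU1 (R S : {set T}) P : tile S -> S \subset R ->
  P \in tilings (R :\: S) -> S |: P \in tilings R.
Proof.
move=> tS SR; rewrite !inE => /andP[pP /forall_inP tP].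
have dS : [disjoint S & R :\: S] by rewrite disjoints_subset setCD subsetUr.
have := partitionU1 pP (tile_neq0 tS) dS.
rewrite -{2}(setID R S) (setIidPr SR) => -> /=.
by apply/forall_inP => B; rewrite !inE => /orP[/eqP->|/tP].
Qed.

Lemma tiling_notin (R S : {set T}) P : tile S -> P \in tilings (R :\: S) -> S \notin P.
Proof.
move=> /tile_neq0/set0Pn[x xS]; rewrite inE => /andP[pP _]; apply/negP => SP.
by have /subsetP/(_ x xS) := partitionS pP SP; rewrite inE xS.
Qed.

Lemma card_tilings_pblock (R S : {set T}) c : tile S -> c \in S -> S \subset R ->
  #|[set P in tilings R | pblock P c == S]| = #|tilings (R :\: S)|.
Proof.
move=> tS cS SR; rewrite -[RHS](card_in_imset (f := fun P => S |: P)); last first.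
  move=> P1 P2 P1t P2t e.
  by rewrite -(setU1K (tiling_notin tS P1t)) e setU1K // (tiling_notin tS P2t).
congr #|pred_of_set _|; apply/setP => P; rewrite inE; apply/andP/imsetP.
- rewrite [P \in _]inE => -[/andP[pP /forall_inP tP] /eqP pbS].
  have SP : S \in P by rewrite -pbS pblock_mem // (cover_partition pP) (subsetP SR).
  exists (P :\ S); last by rewrite setD1K.
  rewrite inE partitionD1 //=; apply/forall_inP => B; rewrite inE => /andP[_ /tP] //.
- case=> P' P't ->; have SPt := tilings_setU1 tS SR P't; split=> //.
  move: SPt; rewrite inE => /andP[/partition_trivIset tI _].
  by apply/eqP/def_pblock; rewrite ?setU11.
Qed.

Lemma card_tilings_cell (R : {set T}) c : c \in R ->
  #|tilings R| = \sum_(S | tile S && (c \in S) && (S \subset R)) #|tilings (R :\: S)|.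
Proof.
move=> cR; rewrite -sum1_card (partition_big (pblock^~ c) (fun S => tile S && (c \in S) && (S \subset R))).
  apply: eq_bigr => S /andP[/andP[tS cS] SR].
  by rewrite -(card_tilings_pblock tS cS SR) -sum1_card; apply: eq_bigl => P; rewrite inE.
move=> P; rewrite inE => /andP[pP /forall_inP tP].
have cP : c \in cover P by rewrite (cover_partition pP).
by rewrite mem_pblock cP andbT tP ?pblock_mem // (partitionS pP) // pblock_mem.
Qed.
End Tilings.

(* A profile p records which cells ahead of the current column are already
   covered: the cell in row a, d columns to the right, is covered iff
   nth false p (a + 6 * d).  A tile reaches at most 3 columns ahead, so
   profiles never need more than 24 entries. *)
Definition hcells (r : nat) := [seq r + 6 * d | d <- iota 0 4].
Definition vcells (r : nat) := [seq r + a | a <- iota 0 4].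
Definition occupy (p : seq bool) (L : seq nat) :=
  mkseq (fun i => nth false p i || (i \in L)) (maxn (size p) 24).
Definition hfree p r := all (fun i => ~~ nth false p i) (hcells r).
Definition vfree p r := (r + 4 <= 6) && all (fun i => ~~ nth false p i) (vcells r).

(* Covers the free cells of rows 6 - k, ..., 5 of the current column, top to
   bottom; h tells whether horizontal tiles still fit. *)
Fixpoint fill (k : nat) (h : bool) (p : seq bool) : seq (seq bool) :=
  if k is k'.+1 then
    let r := 6 - k in
    if nth false p r then fill k' h p else
    (if h && hfree p r then fill k' h (occupy p (hcells r)) else [::]) ++
    (if vfree p r then fill k' h (occupy p (vcells r)) else [::])
  else [:: p].

Definition next_profiles h p := map (drop 6) (fill 6 h p).

Fixpoint count_tilings (k : nat) (p : seq bool) : nat :=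
  if k is k'.+1 then sumn (map (count_tilings k') (next_profiles (4 <= k) p)) else 1.

Lemma count_tilingsS k p :
  count_tilings k.+1 p = sumn (map (count_tilings k) (next_profiles (4 <= k.+1) p)).
Proof. by []. Qed.

Lemma nth_occupy p L i : all (fun x => x < 24) L ->
  nth false (occupy p L) i = nth false p i || (i \in L).
Proof.
move=> L24; rewrite /occupy; case: (ltnP i (maxn (size p) 24)) => hi.
  by rewrite nth_mkseq.
rewrite !nth_default ?size_mkseq //; last by rewrite (leq_trans _ hi) // leq_maxl.
by apply/esym/negP => /(allP L24); rewrite ltnNge (leq_trans _ hi) // leq_maxr.
Qed.

Lemma hcells_lt r : r < 6 -> all (fun x => x < 24) (hcells r).
Proof. by move=> hr; apply/allP => x /mapP[d]; rewrite mem_iota => /andP[_ hd] ->; lia. Qed.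

Lemma vcells_lt r : r < 6 -> all (fun x => x < 24) (vcells r).
Proof. by move=> hr; apply/allP => x /mapP[a]; rewrite mem_iota => /andP[_ ha] ->; lia. Qed.

Lemma mem_hcells a d r : a < 6 -> r < 6 -> (a + 6 * d \in hcells r) = (a == r) && (d < 4).
Proof.
move=> ha hr; apply/mapP/andP => [[d']|[/eqP -> hd]].
  by rewrite mem_iota => /andP[_ hd'] e; split; [apply/eqP|]; lia.
by exists d; rewrite // mem_iota.
Qed.

Lemma mem_vcells a d r : a < 6 -> r + 4 <= 6 ->
  (a + 6 * d \in vcells r) = (d == 0) && (r <= a < r + 4).
Proof.
move=> ha hr; apply/mapP/andP => [[a']|[/eqP -> /andP[h1 h2]]].
  by rewrite mem_iota => /andP[_ ha'] e; split; [apply/eqP|apply/andP; split]; lia.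
by exists (a - r); rewrite ?mem_iota; lia.
Qed.

Lemma big_pred2 (T : finType) (F : T -> nat) (P : pred T) (A B : T) (a b : bool) :
  (a -> b -> A != B) -> (forall x, P x = ((x == A) && a) || ((x == B) && b)) ->
  \sum_(x | P x) F x = (if a then F A else 0) + (if b then F B else 0).
Proof.
move=> neqAB defP; case: a b neqAB defP => [] [] neqAB defP.
- rewrite (bigD1 A) ?defP ?eqxx //= (big_pred1 B) // => x /=.
  rewrite defP !andbT; case: (x =P A) => [->|_] /=; last by rewrite ?orbF ?andbT.
  by apply/esym/negbTE; exact: neqAB.
- by rewrite addn0; apply: big_pred1 => x; rewrite defP !andbT andbF orbF.
- by rewrite add0n; apply: big_pred1 => x; rewrite defP !andbT andbF.
- by rewrite big_pred0 // => x; rewrite defP !andbF.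
Qed.

Section Rectangle.
Variable n : nat.

Definition tile14 : pred {set cell 6 n} := fun S => is_tile 1 4 S.

Lemma tile14_neq0 S : tile14 S -> S != set0.
Proof.
case/existsP=> i /existsP[j /orP[] /andP[/andP[hi hj] /eqP->]];
  have hj' : j < n by lia.
all: by apply/set0Pn; exists (i, Ordinal hj'); rewrite inE /=; lia.
Qed.

Definition free_cells (j : nat) (p : seq bool) : {set cell 6 n} :=
  [set c : cell 6 n | (j <= c.2) && ~~ nth false p (c.1 + 6 * (c.2 - j))].

Lemma free_cells_drop j p : (forall i, i < 6 -> nth false p i) ->
  free_cells j p = free_cells j.+1 (drop 6 p).
Proof.
move=> full; apply/setP => c; rewrite !inE nth_drop.
case: (ltngtP j c.2) => h /=.
- by have -> : 6 + (c.1 + 6 * (c.2 - j.+1)) = c.1 + 6 * (c.2 - j) by lia.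
- by [].
- by rewrite -h subnn muln0 addn0 full.
Qed.

Section FirstFreeCell.
Variables (j : nat) (p : seq bool) (r : nat).
Hypotheses (hr : r < 6) (hj : j < n) (full_above : forall i, i < r -> nth false p i).
Let c : cell 6 n := (Ordinal hr, Ordinal hj).

Lemma block_corner i j' h w :
  c \in @block 6 n i j' h w -> @block 6 n i j' h w \subset free_cells j p -> i = r /\ j' = j.
Proof.
rewrite inE /= => /andP[/andP[i1 i2] /andP[j1 j2]] /subsetP sub_free.
have hi : i < 6 by lia.
have hj' : j' < n by lia.
have /sub_free : ((Ordinal hi, Ordinal hj') : cell 6 n) \in @block 6 n i j' h w.
  by rewrite inE /=; lia.
rewrite inE /= => /andP[jj freeij].
have ej : j' = j by lia.
split=> //; move: freeij; rewrite ej subnn muln0 addn0.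
by case: (ltngtP i r) => // ir; [rewrite full_above | lia].
Qed.

Lemma tile_at_corner S : tile14 S -> c \in S -> S \subset free_cells j p ->
  (S = @block 6 n r j 1 4 /\ j + 4 <= n) \/ (S = @block 6 n r j 4 1 /\ r + 4 <= 6).
Proof.
case/existsP=> i /existsP[j' /orP[] /andP[/andP[hi hj'] /eqP->]] cS Sfree;
  have [ei ej] := block_corner cS Sfree; rewrite -ei -ej.
  by left.
by right.
Qed.

Lemma hblock_sub_free : j + 4 <= n -> (@block 6 n r j 1 4 \subset free_cells j p) = hfree p r.
Proof.
move=> hj4; apply/subsetP/allP => [sub_free x /mapP[d]|hfr [a b]].
  rewrite mem_iota => /andP[_ hd] ->.
  have hb : j + d < n by lia.
  have /sub_free : ((Ordinal hr, Ordinal hb) : cell 6 n) \in @block 6 n r j 1 4.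
    by rewrite inE /=; lia.
  by rewrite inE /= addKn => /andP[].
rewrite !inE /= => /andP[/andP[ra ar] /andP[jb bj]].
rewrite jb; apply: hfr; rewrite mem_hcells //; lia.
Qed.

Lemma vblock_sub_free : r + 4 <= 6 -> (@block 6 n r j 4 1 \subset free_cells j p) = vfree p r.
Proof.
move=> hr4; rewrite /vfree hr4; apply/subsetP/allP => [sub_free x /mapP[a]|vfr [a b]].
  rewrite mem_iota => /andP[_ ha] ->.
  have ha' : r + a < 6 by lia.
  have /sub_free : ((Ordinal ha', Ordinal hj) : cell 6 n) \in @block 6 n r j 4 1.
    by rewrite inE /=; lia.
  by rewrite inE /= subnn muln0 addn0 => /andP[].
rewrite !inE /= => /andP[/andP[ra ar] /andP[jb bj]].
rewrite jb; apply: vfr; rewrite mem_vcells //; lia.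
Qed.

Lemma tile14_hblock : j + 4 <= n -> tile14 (@block 6 n r j 1 4).
Proof.
move=> hj4; apply/existsP; exists (Ordinal hr); apply/existsP; exists (Ordinal hj).
by rewrite eqxx /= andbT; apply/orP; left; lia.
Qed.

Lemma tile14_vblock : r + 4 <= 6 -> tile14 (@block 6 n r j 4 1).
Proof.
move=> hr4; apply/existsP; exists (Ordinal hr); apply/existsP; exists (Ordinal hj).
by rewrite eqxx /= andbT; apply/orP; right; lia.
Qed.

Lemma corner_in_block h w : 0 < h -> 0 < w -> c \in @block 6 n r j h w.
Proof. by move=> h0 w0; rewrite inE /=; lia. Qed.

Lemma tiles_at_corner S :
  tile14 S && (c \in S) && (S \subset free_cells j p) =
  ((S == @block 6 n r j 1 4) && ((4 <= n - j) && hfree p r)) ||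
  ((S == @block 6 n r j 4 1) && vfree p r).
Proof.
apply/idP/idP => [/andP[/andP[tS cS] Sfree]|].
  have [[eS hj4]|[eS hr4]] := tile_at_corner tS cS Sfree; rewrite eS eqxx.
    by rewrite -hblock_sub_free // -eS Sfree; lia.
  by rewrite -vblock_sub_free // -eS Sfree orbT.
case/orP=> /andP[/eqP-> hfr].
  have hj4 : j + 4 <= n by lia.
  by rewrite tile14_hblock // corner_in_block // hblock_sub_free //; case/andP: hfr.
have hr4 : r + 4 <= 6 by case/andP: hfr.
by rewrite tile14_vblock // corner_in_block // vblock_sub_free.
Qed.

Lemma free_cells_hblock :
  free_cells j p :\: @block 6 n r j 1 4 = free_cells j (occupy p (hcells r)).
Proof.
apply/setP => -[a b]; rewrite !inE /= nth_occupy ?hcells_lt //.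
case: (leqP j b) => jb /=; last by rewrite andbF.
rewrite mem_hcells //; case: (a =P r :> nat) => [->|ne] /=; last first.
  have -> : (r <= a < r + 1) = false by lia.
  by rewrite orbF.
have -> : (r <= r < r + 1) = true by lia.
have -> : (b < j + 4) = (b - j < 4) by lia.
by case: (b - j < 4); rewrite ?orbT ?orbF.
Qed.

Lemma free_cells_vblock : r + 4 <= 6 ->
  free_cells j p :\: @block 6 n r j 4 1 = free_cells j (occupy p (vcells r)).
Proof.
move=> hr4; apply/setP => -[a b]; rewrite !inE /= nth_occupy ?vcells_lt //.
case: (leqP j b) => jb /=; last by rewrite andbF.
rewrite mem_vcells //; case: (b - j =P 0) => [e|ne] /=.
  have -> : b < j + 1 by lia.
  by rewrite andbT negb_or andbC.
have -> : (b < j + 1) = false by lia.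
by rewrite andbF orbF.
Qed.

Lemma hblock_neq_vblock : r + 4 <= 6 -> @block 6 n r j 1 4 != @block 6 n r j 4 1.
Proof.
move=> hr4; have hr1 : r.+1 < 6 by lia.
apply/negP => /eqP/setP/(_ ((Ordinal hr1, Ordinal hj) : cell 6 n)); rewrite !inE /=.
have -> : (r <= r.+1 < r + 1) = false by lia.
have -> : (r <= r.+1 < r + 4) by lia.
by rewrite leqnn addn1 ltnSn.
Qed.

End FirstFreeCell.

Lemma card_tilings_fill k j p : j < n -> k <= 6 -> (forall i, i < 6 - k -> nth false p i) ->
  #|tilings tile14 (free_cells j p)| =
  sumn [seq #|tilings tile14 (free_cells j.+1 (drop 6 p'))| | p' <- fill k (4 <= n - j) p].
Proof.
elim: k p => [|k IH] p hj hk full /=.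
  by rewrite addn0 (free_cells_drop j full).
set r := 6 - k.+1; have hr : r < 6 by lia.
have full_r : forall i, i < r -> nth false p i by move=> i; apply: full.
have fill_full L : r \in L -> all (fun x => x < 24) L ->
    forall i, i < 6 - k -> nth false (occupy p L) i.
  move=> rL L24 i hi; rewrite nth_occupy //.
  by case: (ltngtP i r) => ir; [rewrite full_r | lia | rewrite ir rL orbT].
case: ifP => Or.
  apply: IH => //; first lia.
  by move=> i hi; case: (ltngtP i r) => ir; [apply: full_r | lia | rewrite ir].
have corner_free : ((Ordinal hr, Ordinal hj) : cell 6 n) \in free_cells j p.
  by rewrite inE /= leqnn subnn muln0 addn0 Or.
rewrite (card_tilings_cell tile14_neq0 corner_free).
rewrite (big_pred2 _ _ (tiles_at_corner hr hj full_r)); last first.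
  by move=> _ /andP[hr4 _]; exact: (hblock_neq_vblock hr hj).
rewrite map_cat sumn_cat; congr (_ + _).
  case: ifP => // /andP[_ hfr]; rewrite free_cells_hblock //.
  apply: IH => //; first lia.
  by apply: fill_full; [apply/mapP; exists 0; rewrite ?muln0 ?addn0 | exact: hcells_lt].
case: ifP => // vfr; have /andP[hr4 _] := vfr; rewrite free_cells_vblock //.
apply: IH => //; first lia.
by apply: fill_full; [apply/mapP; exists 0; rewrite ?addn0 | exact: vcells_lt].
Qed.

Lemma card_tilings_free k j p : j + k = n -> #|tilings tile14 (free_cells j p)| = count_tilings k p.
Proof.
elim: k j p => [|k IH] j p e.
  have -> : free_cells j p = set0.
    apply/setP => -[a b]; rewrite !inE /=.
    by have -> : (j <= b) = false by have := ltn_ord b; lia.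
  exact: card_tilings0.
have hj : j < n by lia.
rewrite (card_tilings_fill hj (leqnn 6)); last by move=> i; rewrite subnn.
have -> : n - j = k.+1 by lia.
rewrite count_tilingsS /next_profiles -map_comp; congr sumn; apply: eq_map => p' /=.
by apply: IH; lia.
Qed.

Lemma card_tilings_rect : #|tilings tile14 [set: cell 6 n]| = count_tilings n [::].
Proof.
rewrite -(@card_tilings_free n 0 [::]) //; congr #|tilings _ _|.
by apply/setP => c; rewrite !inE nth_nil.
Qed.

Lemma card_interval m i h : i + h <= m -> #|[set x : 'I_m | i <= x < i + h]| = h.
Proof.
move=> ihm; have lt_m (k : 'I_h) : i + k < m by rewrite (leq_trans _ ihm) // ltn_add2l.
have -> : [set x : 'I_m | i <= x < i + h] = (fun k => Ordinal (lt_m k)) @: [set: 'I_h].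
  apply/setP => x; rewrite inE; apply/andP/imsetP => [[ix xih]|[k _ ->]] /=.
    have hk : x - i < h by lia.
    by exists (Ordinal hk); rewrite ?inE //; apply/val_inj => /=; lia.
  by rewrite leq_addr ltn_add2l.
rewrite card_imset ?cardsT ?card_ord // => a b /(congr1 val) /= /addnI; exact: val_inj.
Qed.

Lemma card_block i j h w : i + h <= 6 -> j + w <= n -> #|@block 6 n i j h w| = h * w.
Proof.
move=> ih jw.
have -> : @block 6 n i j h w = setX [set x : 'I_6 | i <= x < i + h] [set y : 'I_n | j <= y < j + w].
  by apply/setP => -[a b]; rewrite !inE.
by rewrite cardsX !card_interval.
Qed.

Lemma card_tile14 S : tile14 S -> #|S| = 4.
Proof. by case/existsP=> i /existsP[j /orP[] /andP[/andP[hi hj] /eqP->]]; rewrite card_block. Qed.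

Lemma ntilings_count N : N.*2 = 3 * n -> ntilings 1 4 6 n N = count_tilings n [::].
Proof.
move=> e; rewrite /ntilings -card_tilings_rect; apply: eq_card => P; rewrite !inE /is_tiling.
case: (boolP (partition P _)) => //= pP.
case: (boolP [forall S in P, _]) => //= /forall_inP tP.
have := card_partition pP; rewrite cardsT card_prod !card_ord.
rewrite (eq_bigr (fun _ => 4)) => [|S /tP]; last exact: card_tile14.
rewrite sum_nat_const => card4.
by rewrite -(eqn_pmul2r (_ : 0 < 4)) // -card4; apply/eqP; lia.
Qed.

End Rectangle.

Lemma sumn_map_count_mem m (f : nat -> nat) (s : seq nat) : all (fun y => y < m) s ->
  sumn (map f s) = \sum_(y < m) count_mem (y : nat) s * f y.
Proof.
elim: s => [|x s IH] /=; first by rewrite big1.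
case/andP=> xm /IH->; under [RHS]eq_bigr do rewrite mulnDl.
rewrite big_split /=; congr (_ + _).
rewrite (bigD1 (Ordinal xm)) //= eqxx mul1n big1 ?addn0 // => y.
by rewrite -val_eqE /= eq_sym => /negbTE->.
Qed.

Fixpoint explore k (S : seq (seq bool)) : seq (seq bool) :=
  if k is k'.+1 then
    explore k' (S ++ [seq p <- undup (flatten (map (next_profiles true) S)) | p \notin S])
  else S.

(* Twenty rounds reach a closed set (profiles_closed); the empty profile comes
   first. *)
Definition profiles := Eval vm_compute in explore 20 [:: [::]].
Definition nP := size profiles.
Definition profile i := nth [::] profiles i.
Definition succ i := [seq index p profiles | p <- next_profiles true (profile i)].

Lemma profiles_closed : all (fun p => all (mem profiles) (next_profiles true p)) profiles.
Proof. by vm_compute. Qed.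

Lemma nP_gt0 : 0 < nP.
Proof. by vm_compute. Qed.

Lemma profile0 : profile 0 = [::].
Proof. by vm_compute. Qed.

Lemma next_profile_mem i p : i < nP -> p \in next_profiles true (profile i) -> p \in profiles.
Proof. by move=> i_lt; apply: (allP (allP profiles_closed _ (mem_nth [::] i_lt))). Qed.

Lemma next_profile i : i < nP -> next_profiles true (profile i) = map profile (succ i).
Proof.
move=> i_lt; rewrite -map_comp -[LHS]map_id; apply/esym/eq_in_map => p p_next /=.
by rewrite /profile nth_index // (next_profile_mem i_lt).
Qed.

Lemma succ_lt i : i < nP -> all (fun y => y < nP) (succ i).
Proof.
by move=> i_lt; apply/allP => _ /mapP[p p_next ->]; rewrite index_mem (next_profile_mem i_lt).
Qed.

(* For each profile, the number of walks of length j reaching it from the empty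
   profile. *)
Fixpoint walks (j : nat) : seq nat :=
  if j is j'.+1 then
    let v := walks j' in let s := map succ (iota 0 nP) in
    [seq sumn [seq count_mem y (nth [::] s i) * nth 0 v i | i <- iota 0 nP] | y <- iota 0 nP]
  else [seq nat_of_bool (i == 0) | i <- iota 0 nP].

Definition nwalks j i := nth 0 (walks j) i.

Lemma nwalks0 (i : 'I_nP) : nwalks 0 i = (i == 0 :> nat).
Proof. by rewrite /nwalks (nth_map 0) ?size_iota // nth_iota. Qed.

Lemma nwalksS j (y : 'I_nP) :
  nwalks j.+1 y = \sum_(i < nP) count_mem (y : nat) (succ i) * nwalks j i.
Proof.
rewrite -(big_mkord xpredT (fun i => count_mem (y : nat) (succ i) * nwalks j i)).
rewrite /nwalks (nth_map 0) ?size_iota // nth_iota // sumnE big_map /index_iota subn0.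
apply: eq_big_seq => i; rewrite mem_iota => /andP[_ i_lt].
by rewrite (nth_map 0) ?size_iota // nth_iota.
Qed.

(* With k >= 3 columns left at the end, every one of the first j steps still
   allows horizontal tiles. *)
Lemma count_tilings_walks k j : 3 <= k ->
  count_tilings (k + j) [::] = \sum_(i < nP) nwalks j i * count_tilings k (profile i).
Proof.
elim: j k => [|j IH] k k3.
  rewrite addn0 (bigD1 (Ordinal nP_gt0)) // nwalks0 profile0 mul1n big1 => [|i].
    exact/esym/addn0.
  by rewrite nwalks0 -val_eqE /= => /negbTE->.
rewrite -addSnnS IH 1?ltnW //.
under eq_bigr => i _ do rewrite count_tilingsS ltnS k3 next_profile // -map_comp
  (sumn_map_count_mem _ (succ_lt (ltn_ord i))) big_distrr.
rewrite exchange_big; apply: eq_bigr => y _ /=.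
by rewrite nwalksS big_distrl; apply: eq_bigr => i _ /=; rewrite mulnCA mulnA.
Qed.

Lemma walks_rec : let: (w16, w12, w8, w4, w0) := (walks 16, walks 12, walks 8, walks 4, walks 0) in
  all (fun i => nth 0 w16 i + 6 * nth 0 w8 i + nth 0 w0 i == 7 * nth 0 w12 i + 4 * nth 0 w4 i)
    (iota 0 nP).
Proof. by vm_compute. Qed.

Lemma nwalks_rec i : i < nP ->
  nwalks 16 i + 6 * nwalks 8 i + nwalks 0 i = 7 * nwalks 12 i + 4 * nwalks 4 i.
Proof. by move=> i_lt; apply/eqP/(allP walks_rec); rewrite mem_iota. Qed.

Lemma sum_mul_lincomb m (a b c : nat) (u v w x y f : 'I_m -> nat) :
  (forall i, u i + a * v i + w i = b * x i + c * y i) ->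
  \sum_i u i * f i + a * \sum_i v i * f i + \sum_i w i * f i =
  b * \sum_i x i * f i + c * \sum_i y i * f i.
Proof.
move=> uvwxy; rewrite !big_distrr -!big_split; apply: eq_bigr => i _ /=.
by rewrite !mulnA -!mulnDl uvwxy mulnDl.
Qed.

Lemma count_tilings_rec k : 3 <= k ->
  count_tilings (k + 16) [::] + 6 * count_tilings (k + 8) [::] + count_tilings k [::] =
  7 * count_tilings (k + 12) [::] + 4 * count_tilings (k + 4) [::].
Proof.
move=> k3; have := count_tilings_walks 0 k3; rewrite addn0 => ->.
rewrite (count_tilings_walks 16 k3) (count_tilings_walks 8 k3).
rewrite (count_tilings_walks 12 k3) (count_tilings_walks 4 k3).
by apply: sum_mul_lincomb => i; apply: nwalks_rec.
Qed.

Definition T14_6_count N := if 3 %| N then count_tilings (N %/ 3).*2 [::] else 0.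

Lemma T14_6E N : T14_6 N = T14_6_count N.
Proof.
rewrite /T14_6 /T14_6_count -mul2n Gauss_dvdr //; case: ifP => // N3.
have -> : 2 * N %/ 3 = (N %/ 3).*2 by rewrite -muln_divA // mul2n.
by rewrite ntilings_count //; lia.
Qed.

Lemma T14_6_count_rec N : 30 <= N ->
  T14_6_count N + 6 * T14_6_count (N - 12) + T14_6_count (N - 24) =
  7 * T14_6_count (N - 6) + 4 * T14_6_count (N - 18).
Proof.
move=> N30; rewrite /T14_6_count.
have dvd3_sub k : k <= N -> 3 %| k -> (3 %| N - k) = (3 %| N).
  by move=> kN k3; apply/idP/idP; lia.
rewrite !dvd3_sub //; [|lia..].
case: ifP => // N3.
set k := (N %/ 3).*2 - 16.
have -> : (N %/ 3).*2 = k + 16 by lia.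
have -> : ((N - 6) %/ 3).*2 = k + 12 by lia.
have -> : ((N - 12) %/ 3).*2 = k + 8 by lia.
have -> : ((N - 18) %/ 3).*2 = k + 4 by lia.
have -> : ((N - 24) %/ 3).*2 = k by lia.
by apply: count_tilings_rec; lia.
Qed.

Local Open Scope ring_scope.

Definition lag (t : nat -> int) (N k : nat) : int := if (k <= N)%N then t (N - k)%N else 0.

Definition denom_conv (t : nat -> int) (N : nat) : int :=
  lag t N 0 - 7 * lag t N 6 + 6 * lag t N 12 - 4 * lag t N 18 + lag t N 24.

Definition numer_coef (i : nat) : int :=
  (i == 0%N)%:R - (i == 6%N)%:R *+ 3 + (i == 12%N)%:R *+ 3 - (i == 18%N)%:R.

Lemma coef_denom i : denom`_i =
  (i == 0%N)%:R - 7 * (i == 6%N)%:R + 6 * (i == 12%N)%:R - 4 * (i == 18%N)%:R + (i == 24%N)%:R.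
Proof. by rewrite /denom !coefE. Qed.

Lemma coef_numer i : numer`_i = numer_coef i.
Proof.
have -> : numer = 1 - 'X^6 *+ 3 + 'X^12 *+ 3 - 'X^18.
  have X12 : 'X^12 = ('X^6 : {poly int}) ^+ 2 by rewrite -exprM.
  have X18 : 'X^18 = ('X^6 : {poly int}) ^+ 3 by rewrite -exprM.
  by rewrite /numer X12 X18; move: ('X^6 : {poly int}) => x; ring.
by rewrite !coefE.
Qed.

Lemma sum_delta_lag t N k : \sum_(i < N.+1) (i == k :> nat)%:R * t (N - i)%N = lag t N k.
Proof.
rewrite /lag; case: leqP => [kN|Nk].
  rewrite (bigD1 (Ordinal (kN : (k < N.+1)%N))) //= eqxx mul1r big1 ?addr0 // => i.
  by rewrite -val_eqE /= => /negbTE->; rewrite mul0r.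
by rewrite big1 // => i _; rewrite ltn_eqF ?mul0r // (leq_trans (ltn_ord i) Nk).
Qed.

Lemma sum_coef_denom t N : \sum_(i < N.+1) denom`_i * t (N - i)%N = denom_conv t N.
Proof.
have distr (a b c d e x : int) : (a - 7 * b + 6 * c - 4 * d + e) * x =
    a * x - 7 * (b * x) + 6 * (c * x) - 4 * (d * x) + e * x by ring.
under eq_bigr do rewrite coef_denom distr.
by rewrite !big_split /= !sumrN -!mulr_sumr !sum_delta_lag.
Qed.

Lemma denom_conv_T14_6_small :
  all (fun N => denom_conv (fun M => (T14_6_count M)%:Z) N == numer_coef N) (iota 0 30).
Proof. by vm_compute. Qed.

Theorem mainTheorem5 :
  forall N : nat,
    \sum_(i < N.+1) denom`_i * ((T14_6 (N - i)%N)%:Z) = numer`_N.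
Proof.
move=> N; under eq_bigr do rewrite T14_6E.
rewrite (sum_coef_denom (fun M => (T14_6_count M)%:Z)) coef_numer.
have [N_small|N_large] := ltnP N 30.
  by apply/eqP/(allP denom_conv_T14_6_small); rewrite mem_iota.
rewrite /denom_conv /lag /numer_coef !ifT ?(leq_trans _ N_large) //.
rewrite !gtn_eqF ?(leq_trans _ N_large) //= subn0.
have := T14_6_count_rec N_large; lia.
Qed.
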